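(* Let $a,b,c$ be positive numbers with $a<b<c$. Then $\mathcal D_{a,b,c}=\emptyset$ if and only if $Q_{a,b,c}<+\infty$.
   Context: For $a,b,c>0$ and $t\in\mathbb R$, $\mathbf M_{a,b,c}(t)=(\chi_{[0,c)}(t-\mu+\lambda))_{\mu\in a\mathbb Z,\lambda\in b\mathbb Z}$ is the infinite matrix with rows indexed by $a\mathbb Z$ and columns by $b\mathbb Z$, acting by $(\mathbf M_{a,b,c}(t)\mathbf x)(\mu)=\sum_{\lambda\in b\mathbb Z}\chi_{[0,c)}(t-\mu+\lambda)\mathbf x(\lambda)$. $\mathcal B_b$ is the set of vectors $(\mathbf x(\lambda))_{\lambda\in b\mathbb Z}$ with entries in $\{0,1\}$, and $\mathcal B_b^0=\{\mathbf x\in\mathcal B_b:\mathbf x(0)=1\}$. $\mathbf 2$ denotes the vector indexed by $a\mathbb Z$ all of whose entries are $2$. $\mathcal D_{a,b,c}=\{t\in\mathbb R:\mathbf M_{a,b,c}(t)\mathbf x=\mathbf 2\text{ for some }\mathbf x\in\mathcal B_b^0\}$. For $t\in\mathbb R$ and $\mathbf x\in\mathcal B_b$, let $K(t,\mathbf x)=\{\mu\in a\mathbb Z:(\mathbf M_{a,b,c}(t)\mathbf x)(\mu)=2\}$, let $Q_{a,b,c}(t,\mathbf x)=0$ if $K(t,\mathbf x)=\emptyset$ and otherwise $Q_{a,b,c}(t,\mathbf x)=\sup\{n\in\mathbb N:[\mu,\mu+na)\cap a\mathbb Z\subset K(t,\mathbf x)\text{ for some }\mu\in a\mathbb Z\}$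 (the maximal length of a run of consecutive entries equal to $2$), and $Q_{a,b,c}=\sup_{t\in\mathbb R}\sup_{\mathbf x\in\mathcal B_b}Q_{a,b,c}(t,\mathbf x)\in[0,+\infty]$. *)

From Stdlib Require Import Reals ZArith List.
Open Scope R_scope.

(* Row index mu = a*m (m : Z), column index lambda = b*k (k : Z).
   Binary vectors x in B_b are functions Z -> bool (x k is the entry at b*k). *)

Definition in_Ico (c s : R) : Prop := 0 <= s < c.

(* (M_{a,b,c}(t) x)(a*m) = n : the sum  sum_k chi_[0,c)(t - a m + b k) x(b k)
   has value n.  Since entries are 0/1, this sum is the (finite) number of
   indices k with x k = 1 and t - a m + b k in [0,c). *)
Definition Mx_val (a b c t : R) (x : Z -> bool) (m : Z) (n : nat) : Prop :=
  exists l : list Z,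
    NoDup l /\
    (forall k : Z, In k l <-> (x k = true /\ in_Ico c (t - a * IZR m + b * IZR k))) /\
    length l = n.

Definition D_set (a b c : R) (t : R) : Prop :=
  exists x : Z -> bool, x 0%Z = true /\ forall m : Z, Mx_val a b c t x m 2.

Definition in_K (a b c t : R) (x : Z -> bool) (m : Z) : Prop := Mx_val a b c t x m 2.

Definition has_run (a b c t : R) (x : Z -> bool) (n : nat) : Prop :=
  exists m0 : Z, forall j : nat, (j < n)%nat -> in_K a b c t x (m0 + Z.of_nat j)%Z.

(* Q_{a,b,c} < +infinity : the sup over t, x and run lengths is finite. *)
Definition Q_finite (a b c : R) : Prop :=
  exists N : nat, forall (t : R) (x : Z -> bool) (n : nat), has_run a b c t x n -> (n <= N)%nat.

From Stdlib Require Import Reals ZArith List Lra Lia Classical ClassicalEpsilon FinFun Rtopology.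
Open Scope R_scope.

(* If t ∈ D_{a,b,c} is witnessed by x, every row of M(t)x equals 2, so runs of
   every length exist and Q = +oo.  Conversely, if runs are unbounded, then
   after translating rows and columns (the matrix is equivariant under
   t ↦ t - a m0 + b k0) we get, for every N, a configuration (t_N, x_N) with
   t_N ∈ [0,c), x_N(0) = 1 and rows 2 on the window |m| <= N.  A compactness
   argument produces a limit (t, x): x is an "infinitely often" branch of the
   bits (x_N), and t is a cluster point of the t_N approached from one side
   only.  As chi_[0,c) is right-continuous, a limit from the right keeps all
   rows equal to 2; a limit from the left yields rows of 2 for the indicator
   of (0,c], which the reflection t ↦ c - t, x ↦ x(-.) turns back into [0,c).
   Either way D_{a,b,c} is nonempty. *)

Definition count_exactly (P : Z -> Prop) (n : nat) : Prop :=
  exists l : list Z, NoDup l /\ (forall k, In k l <-> P k) /\ length l = n.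

Lemma count_ext (P Q : Z -> Prop) n :
  (forall k, P k <-> Q k) -> count_exactly P n -> count_exactly Q n.
Proof.
  intros HPQ [l [Hnd [Hin Hlen]]]. exists l. repeat split; auto.
  - intro Hk. apply HPQ, Hin, Hk.
  - intro Hk. apply Hin, HPQ, Hk.
Qed.

Lemma count_bij (P Q : Z -> Prop) n (f g : Z -> Z) :
  (forall k, g (f k) = k) -> (forall k, f (g k) = k) ->
  (forall k, Q k <-> P (g k)) -> count_exactly P n -> count_exactly Q n.
Proof.
  intros Hgf Hfg HQ [l [Hnd [Hin Hlen]]]. exists (map f l). split; [|split].
  - apply Injective_map_NoDup; [|exact Hnd].
    intros x y E. rewrite <- (Hgf x), <- (Hgf y), E. reflexivity.
  - intro k. rewrite in_map_iff, HQ, <- Hin. split.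
    + intros [y [<- Hy]]. rewrite Hgf. exact Hy.
    + intro Hk. exists (g k). auto.
  - rewrite length_map. exact Hlen.
Qed.

Definition row_count (I : R -> Prop) (a b t : R) (x : Z -> bool) (m : Z) (n : nat) : Prop :=
  count_exactly (fun k => x k = true /\ I (t - a * IZR m + b * IZR k)) n.

Lemma row_count_shift I a b t x m m0 k0 n :
  row_count I a b t x (m + m0) n ->
  row_count I a b (t - a * IZR m0 + b * IZR k0) (fun k => x (k + k0)%Z) m n.
Proof.
  apply (count_bij _ _ n (fun k => (k - k0)%Z) (fun k => (k + k0)%Z)); [lia|lia|].
  intro k. rewrite !plus_IZR.
  replace (t - a * (IZR m + IZR m0) + b * (IZR k + IZR k0))
    with (t - a * IZR m0 + b * IZR k0 - a * IZR m + b * IZR k) by ring.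
  reflexivity.
Qed.

Lemma row_count_reflect a b c t x m n :
  row_count (fun s => 0 < s <= c) a b t x m n ->
  row_count (in_Ico c) a b (c - t) (fun k => x (- k)%Z) (- m) n.
Proof.
  apply (count_bij _ _ n Z.opp Z.opp); [lia|lia|].
  intro k. unfold in_Ico. rewrite !opp_IZR.
  replace (c - t - a * - IZR m + b * IZR k) with (c - (t - a * IZR m + b * - IZR k))
    by ring.
  split; intros [Hx Hs]; split; auto; lra.
Qed.

(* A run of length 2N+1 can be recentred: its middle row becomes row 0 and a
   column contributing to it becomes column 0, which puts t into [0,c). *)
Lemma centered_window a b c t x n N :
  has_run a b c t x n -> (2 * N + 1 <= n)%nat ->
  exists t' x', 0 <= t' < c /\ x' 0%Z = true /\
    forall m, (Z.abs m <= Z.of_nat N)%Z -> Mx_val a b c t' x' m 2.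
Proof.
  intros [m0 Hrun] Hn.
  set (mid := (m0 + Z.of_nat N)%Z).
  assert (Hmid : in_K a b c t x mid) by (apply Hrun; lia).
  destruct Hmid as [[|k l] [_ [Hin Hlen]]]; [discriminate|].
  destruct (proj1 (Hin k) (or_introl eq_refl)) as [Hxk Hico].
  exists (t - a * IZR mid + b * IZR k), (fun j => x (j + k)%Z).
  split; [exact Hico|split; [exact Hxk|]].
  intros m Hm. apply row_count_shift.
  replace (m + mid)%Z with (m0 + Z.of_nat (Z.to_nat (m + Z.of_nat N)))%Z
    by (unfold mid; lia).
  apply Hrun. lia.
Qed.

Lemma unbounded_runs a b c :
  ~ Q_finite a b c -> forall N, exists t x n, has_run a b c t x n /\ (N <= n)%nat.
Proof.
  intros HQ N. apply NNPP. intro Hno. apply HQ. exists N.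
  intros t x n Hrun. apply NNPP. intro Hn. apply Hno. exists t, x, n. split; [exact Hrun|lia].
Qed.

Definition infinitely_often (P : nat -> Prop) : Prop :=
  forall N, exists n, (N <= n)%nat /\ P n.

Definition bool_of (Q : Prop) : bool :=
  if excluded_middle_informative Q then true else false.

Lemma io_split (P Q : nat -> Prop) :
  infinitely_often P ->
  infinitely_often (fun n => P n /\ Q n) \/ infinitely_often (fun n => P n /\ ~ Q n).
Proof.
  intro HP. apply NNPP. intro H. apply not_or_and in H. destruct H as [H1 H2].
  apply not_all_ex_not in H1. destruct H1 as [N1 H1].
  apply not_all_ex_not in H2. destruct H2 as [N2 H2].
  destruct (HP (N1 + N2)%nat) as [n [Hn Pn]].
  destruct (classic (Q n)); [apply H1|apply H2]; exists n; split; auto; lia.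
Qed.

(* Among infinitely many indices, one value of a bit occurs infinitely often;
   we pick [true] whenever it does. *)
Lemma io_refine (P : nat -> Prop) (Y : nat -> bool) :
  infinitely_often P ->
  infinitely_often (fun n => P n /\ Y n = bool_of (infinitely_often (fun n => P n /\ Y n = true))).
Proof.
  intro HP. unfold bool_of. destruct (excluded_middle_informative _) as [H|H]; [exact H|].
  destruct (io_split P (fun n => Y n = true) HP) as [H'|H']; [contradiction|].
  intro N. destruct (H' N) as [n [Hn [Pn HYn]]]. exists n. split; [exact Hn|split; [exact Pn|]].
  destruct (Y n); [contradiction|reflexivity].
Qed.

Fixpoint branch_set (Y : nat -> nat -> bool) (J : nat) : nat -> Prop :=
  match J with
  | O => fun _ => True
  | S j => fun n => branch_set Y j n /\
      Y j n = bool_of (infinitely_often (fun n' => branch_set Y j n' /\ Y j n' = true))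
  end.

Definition branch (Y : nat -> nat -> bool) (j : nat) : bool :=
  bool_of (infinitely_often (fun n => branch_set Y j n /\ Y j n = true)).

Lemma branch_set_io Y J : infinitely_often (branch_set Y J).
Proof.
  induction J as [|J IH].
  - intro N. exists N. split; [lia|exact I].
  - exact (io_refine _ (Y J) IH).
Qed.

Lemma branch_set_agree Y J n : branch_set Y J n -> forall j, (j < J)%nat -> Y j n = branch Y j.
Proof.
  induction J as [|J IH]; intros HJ j Hj; [lia|].
  destruct HJ as [HJ HY]. destruct (Nat.eq_dec j J) as [->|Hne]; [exact HY|].
  apply IH; [exact HJ|lia].
Qed.

Lemma diagonal_branch (Y : nat -> nat -> bool) :
  exists (beta : nat -> bool) (phi : nat -> nat),
    forall J, (J <= phi J)%nat /\ forall j, (j < J)%nat -> Y j (phi J) = beta j.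
Proof.
  destruct (choice (fun J n => (J <= n)%nat /\ branch_set Y J n)
                   (fun J => branch_set_io Y J J)) as [phi Hphi].
  exists (branch Y), phi. intro J. destruct (Hphi J) as [HJ Hset].
  split; [exact HJ|exact (branch_set_agree Y J _ Hset)].
Qed.

Definition zcode (k : Z) : nat := Z.to_nat (if (0 <=? k)%Z then 2 * k else - 2 * k - 1)%Z.

Definition zdecode (j : nat) : Z :=
  if Nat.even j then Z.of_nat (Nat.div2 j) else (- Z.of_nat (Nat.div2 j) - 1)%Z.

Lemma zdecode_zcode k : zdecode (zcode k) = k.
Proof.
  unfold zcode, zdecode. destruct (Z.leb_spec 0 k).
  - replace (Z.to_nat (2 * k)) with (2 * Z.to_nat k)%nat by lia.
    rewrite Nat.even_even, Nat.div2_double. lia.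
  - replace (Z.to_nat (-2 * k - 1)) with (2 * Z.to_nat (- k - 1) + 1)%nat by lia.
    rewrite Nat.even_odd, Nat.div2_odd'. lia.
Qed.

Lemma zcode_le k : (zcode k <= 2 * Z.abs_nat k)%nat.
Proof. unfold zcode. destruct (Z.leb_spec 0 k); lia. Qed.

Definition right_offset (e d : R) : Prop := 0 <= d < e.
Definition left_offset (e d : R) : Prop := - e < d < 0.

Lemma one_sided_cluster (u : nat -> R) l :
  ValAdh u l ->
  (forall e N, 0 < e -> exists p, (N <= p)%nat /\ right_offset e (u p - l)) \/
  (forall e N, 0 < e -> exists p, (N <= p)%nat /\ left_offset e (u p - l)).
Proof.
  intro Hcl. apply NNPP. intro H. apply not_or_and in H. destruct H as [H1 H2].
  apply not_all_ex_not in H1. destruct H1 as [e1 H1]. apply not_all_ex_not in H1. destruct H1 as [N1 H1].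
  apply not_all_ex_not in H2. destruct H2 as [e2 H2]. apply not_all_ex_not in H2. destruct H2 as [N2 H2].
  apply imply_to_and in H1. destruct H1 as [He1 H1].
  apply imply_to_and in H2. destruct H2 as [He2 H2].
  assert (He : 0 < Rmin e1 e2) by (apply Rmin_glb_lt; assumption).
  destruct (Hcl (disc l (mkposreal _ He)) (N1 + N2)%nat) as [p [Hp Hdisc]].
  { exists (mkposreal _ He). intros y Hy. exact Hy. }
  unfold disc in Hdisc. simpl in Hdisc. apply Rabs_def2 in Hdisc.
  pose proof (Rmin_l e1 e2). pose proof (Rmin_r e1 e2).
  destruct (Rle_or_lt l (u p)).
  - apply H1. exists p. split; [lia|]. unfold right_offset. lra.
  - apply H2. exists p. split; [lia|]. unfold left_offset. lra.
Qed.

Lemma cluster_bounds (u : nat -> R) l lo hi :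
  ValAdh u l -> (forall n, lo <= u n <= hi) -> lo <= l <= hi.
Proof.
  intros Hcl Hu. apply NNPP. intro Hout.
  assert (Hd : 0 < Rmax (lo - l) (l - hi)).
  { destruct (Rle_or_lt lo l); [apply Rlt_le_trans with (l - hi)|
      apply Rlt_le_trans with (lo - l)]; try apply Rmax_r; try apply Rmax_l; lra. }
  destruct (Hcl (disc l (mkposreal _ Hd)) O) as [p [_ Hp]].
  { exists (mkposreal _ Hd). intros y Hy. exact Hy. }
  unfold disc in Hp. simpl in Hp. apply Rabs_def2 in Hp. specialize (Hu p).
  unfold Rmax in Hp. destruct (Rle_dec (lo - l) (l - hi)); lra.
Qed.

Definition approaches (near : R -> R -> Prop) (T : nat -> R) (X : nat -> Z -> bool)
    (t : R) (x : Z -> bool) : Prop :=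
  forall (K : nat) (e : R) (N : nat), 0 < e -> exists n, (N <= n)%nat /\
    near e (T n - t) /\ forall k, (Z.abs k <= Z.of_nat K)%Z -> X n k = x k.

Lemma configuration_cluster lo hi (T : nat -> R) (X : nat -> Z -> bool) :
  (forall n, lo <= T n <= hi) ->
  exists t x, lo <= t <= hi /\
    (approaches right_offset T X t x \/ approaches left_offset T X t x).
Proof.
  intro HT.
  destruct (diagonal_branch (fun j n => X n (zdecode j))) as [beta [phi Hphi]].
  set (x := fun k => beta (zcode k)).
  assert (Hagree : forall K p, (2 * K < p)%nat ->
            forall k, (Z.abs k <= Z.of_nat K)%Z -> X (phi p) k = x k).
  { intros K p Hp k Hk. destruct (Hphi p) as [_ Hbits].
    rewrite <- (zdecode_zcode k) at 1. apply Hbits. pose proof (zcode_le k). lia. }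
  destruct (Bolzano_Weierstrass (fun p => T (phi p)) _ (compact_P3 lo hi) (fun p => HT (phi p)))
    as [t Ht].
  exists t, x. split; [exact (cluster_bounds _ _ _ _ Ht (fun p => HT (phi p)))|].
  assert (Hlift : forall near : R -> R -> Prop,
     (forall e N, 0 < e -> exists p, (N <= p)%nat /\ near e (T (phi p) - t)) ->
     approaches near T X t x).
  { intros near Hnear K e N He. destruct (Hnear e (N + 2 * K + 1)%nat He) as [p [Hp Hn]].
    exists (phi p). destruct (Hphi p) as [Hle _].
    split; [lia|split; [exact Hn|apply (Hagree K); lia]]. }
  destruct (one_sided_cluster _ _ Ht); [left|right]; apply Hlift; assumption.
Qed.

Lemma in_Ico_right_local c s0 :
  exists e, 0 < e /\ forall d, right_offset e d -> (in_Ico c (s0 + d) <-> in_Ico c s0).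
Proof.
  unfold in_Ico, right_offset.
  destruct (Rlt_dec s0 0); [|destruct (Rlt_dec s0 c)].
  - exists (- s0). split; [lra|]. intros d Hd. lra.
  - exists (c - s0). split; [lra|]. intros d Hd. lra.
  - exists 1. split; [lra|]. intros d Hd. lra.
Qed.

Lemma in_Ico_left_local c s0 :
  exists e, 0 < e /\ forall d, left_offset e d -> (in_Ico c (s0 + d) <-> 0 < s0 <= c).
Proof.
  unfold in_Ico, left_offset.
  destruct (Rle_dec s0 0); [|destruct (Rle_dec s0 c)].
  - exists 1. split; [lra|]. intros d Hd. lra.
  - exists s0. split; [lra|]. intros d Hd. lra.
  - exists (s0 - c). split; [lra|]. intros d Hd. lra.
Qed.

Lemma uniform_tolerance (G : Z -> R -> Prop) :
  (forall k e e', 0 < e' <= e -> G k e -> G k e') ->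
  (forall k, exists e, 0 < e /\ G k e) ->
  forall K : nat, exists e, 0 < e /\ forall k, (Z.abs k <= Z.of_nat K)%Z -> G k e.
Proof.
  intros Hmono Hex K. induction K as [|K [e [He IH]]].
  - destruct (Hex 0%Z) as [e [He H]]. exists e. split; [exact He|].
    intros k Hk. replace k with 0%Z by lia. exact H.
  - destruct (Hex (Z.of_nat (S K))) as [e1 [He1 H1]].
    destruct (Hex (- Z.of_nat (S K))%Z) as [e2 [He2 H2]].
    assert (He' : 0 < Rmin e (Rmin e1 e2)) by (repeat apply Rmin_glb_lt; auto).
    pose proof (Rmin_l e (Rmin e1 e2)). pose proof (Rmin_r e (Rmin e1 e2)).
    pose proof (Rmin_l e1 e2). pose proof (Rmin_r e1 e2).
    exists (Rmin e (Rmin e1 e2)). split; [exact He'|]. intros k Hk.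
    destruct (Z_le_gt_dec (Z.abs k) (Z.of_nat K)); [apply (Hmono k e); [lra|auto]|].
    destruct (Z_le_gt_dec 0 k).
    + replace k with (Z.of_nat (S K)) by lia. apply (Hmono _ e1); [lra|exact H1].
    + replace k with (- Z.of_nat (S K))%Z by lia. apply (Hmono _ e2); [lra|exact H2].
Qed.

Lemma far_column (I : R -> Prop) a b c t m (K : nat) k :
  0 < b -> (forall s, I s -> 0 <= s <= c) -> 0 <= t <= c ->
  Rabs (a * IZR m) + c < INR K * b -> (Z.of_nat K < Z.abs k)%Z ->
  ~ I (t - a * IZR m + b * IZR k).
Proof.
  intros hb Hsupp Ht HK Hk HI. apply Hsupp in HI.
  assert (Hk' : INR K + 1 <= Rabs (IZR k)).
  { rewrite INR_IZR_INZ, <- plus_IZR, Rabs_Zabs. apply IZR_le. lia. }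
  assert (Hbk : b * (INR K + 1) <= Rabs (b * IZR k)).
  { rewrite Rabs_mult, (Rabs_pos_eq b) by lra. apply Rmult_le_compat_l; lra. }
  assert (Hsum : Rabs (b * IZR k) <= Rabs (a * IZR m) + c).
  { replace (b * IZR k) with ((t - a * IZR m + b * IZR k) - t + a * IZR m) by ring.
    pose proof (Rle_abs (a * IZR m)) as Hm1. pose proof (Rle_abs (- (a * IZR m))) as Hm2.
    rewrite Rabs_Ropp in Hm2. apply Rabs_le. split; lra. }
  lra.
Qed.

Lemma exists_radius b r : 0 < b -> exists K : nat, r < INR K * b.
Proof.
  intro hb. destruct (INR_unbounded (r / b)) as [K HK]. exists K.
  apply (Rmult_lt_compat_r b) in HK; [|lra].
  unfold Rdiv in HK. rewrite Rmult_assoc, Rinv_l, Rmult_1_r in HK; lra.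
Qed.

Lemma row_limit (I0 I : R -> Prop) (near : R -> R -> Prop) a b c
    (T : nat -> R) (X : nat -> Z -> bool) t x m :
  0 < b ->
  (forall s, I0 s -> 0 <= s <= c) -> (forall s, I s -> 0 <= s <= c) ->
  (forall e e' d, e' <= e -> near e' d -> near e d) ->
  (forall s0, exists e, 0 < e /\ forall d, near e d -> (I0 (s0 + d) <-> I s0)) ->
  (forall n, 0 <= T n <= c) -> 0 <= t <= c ->
  approaches near T X t x ->
  (forall n, (Z.abs m <= Z.of_nat n)%Z -> row_count I0 a b (T n) (X n) m 2) ->
  row_count I a b t x m 2.
Proof.
  intros hb HI0 HI Hmono Hlocal HT Ht Happ Hrows.
  destruct (exists_radius b (Rabs (a * IZR m) + c) hb) as [K HK].
  set (s := fun k => t - a * IZR m + b * IZR k).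
  destruct (uniform_tolerance (fun k e => forall d, near e d -> (I0 (s k + d) <-> I (s k))))
    with (K := K) as [e [He Htol]].
  { intros k e e' He' H d Hd. apply H, (Hmono e e'); [lra|exact Hd]. }
  { intro k. apply Hlocal. }
  destruct (Happ K e (Z.to_nat (Z.abs m)) He) as [n [Hn [Hnear Hbits]]].
  apply (count_ext (fun k => X n k = true /\ I0 (T n - a * IZR m + b * IZR k)));
    [|apply Hrows; lia].
  intro k. destruct (Z_le_gt_dec (Z.abs k) (Z.of_nat K)) as [Hk|Hk].
  - rewrite (Hbits k Hk).
    replace (T n - a * IZR m + b * IZR k) with (s k + (T n - t)) by (unfold s; ring).
    rewrite (Htol k Hk _ Hnear). reflexivity.
  - pose proof (far_column I0 a b c (T n) m K k hb HI0 (HT n) HK ltac:(lia)).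
    pose proof (far_column I a b c t m K k hb HI Ht HK ltac:(lia)). tauto.
Qed.

Lemma limit_in_D a b c (T : nat -> R) (X : nat -> Z -> bool) :
  0 < b ->
  (forall n, 0 <= T n < c) -> (forall n, X n 0%Z = true) ->
  (forall n m, (Z.abs m <= Z.of_nat n)%Z -> Mx_val a b c (T n) (X n) m 2) ->
  exists t, D_set a b c t.
Proof.
  intros hb HT HX0 Hrows.
  assert (HTc : forall n, 0 <= T n <= c) by (intro n; specialize (HT n); lra).
  destruct (configuration_cluster 0 c T X HTc) as [t [x [Ht Hside]]].
  assert (Hx0 : x 0%Z = true).
  { destruct Hside as [Happ|Happ]; destruct (Happ O 1 O Rlt_0_1) as [n [_ [_ Hbits]]];
      rewrite <- (Hbits 0%Z); auto; lia. }
  assert (Hsupp : forall s, in_Ico c s -> 0 <= s <= c) by (unfold in_Ico; intros; lra).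
  destruct Hside as [Happ|Happ].
  - exists t, x. split; [exact Hx0|]. intro m.
    apply (row_limit (in_Ico c) (in_Ico c) right_offset a b c T X t x m hb Hsupp Hsupp);
      [unfold right_offset; intros; lra|apply in_Ico_right_local|exact HTc|exact Ht|exact Happ|].
    intros n Hn. exact (Hrows n m Hn).
  - exists (c - t), (fun k => x (- k)%Z). split; [exact Hx0|]. intro m.
    rewrite <- (Z.opp_involutive m). apply row_count_reflect.
    apply (row_limit (in_Ico c) (fun s => 0 < s <= c) left_offset a b c T X t x (- m) hb Hsupp);
      [intros; lra|unfold left_offset; intros; lra|apply in_Ico_left_local|exact HTc|exact Ht
      |exact Happ|].
    intros n Hn. exact (Hrows n (- m)%Z Hn).
Qed.

Theorem lemma3p4 (a b c : R) (ha : 0 < a) (hab : a < b) (hbc : b < c) :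
  (forall t : R, ~ D_set a b c t) <-> Q_finite a b c.
Proof.
  split.
  - intro HD. apply NNPP. intro HQ.
    assert (Hwin : forall N, exists p : R * (Z -> bool),
       0 <= fst p < c /\ snd p 0%Z = true /\
       forall m, (Z.abs m <= Z.of_nat N)%Z -> Mx_val a b c (fst p) (snd p) m 2).
    { intro N. destruct (unbounded_runs a b c HQ (2 * N + 1)) as [t [x [n [Hrun Hn]]]].
      destruct (centered_window a b c t x n N Hrun Hn) as [t' [x' Hwin]].
      exists (t', x'). exact Hwin. }
    destruct (choice _ Hwin) as [F HF].
    destruct (limit_in_D a b c (fun n => fst (F n)) (fun n => snd (F n)) ltac:(lra))
      as [t Ht]; [apply HF..|].
    exact (HD t Ht).
  - intros [N HN] t [x [_ Hrows]].
    assert (Hrun : has_run a b c t x (S N)) by (exists 0%Z; intros j _; apply Hrows).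
    specialize (HN t x (S N) Hrun). lia.
Qed.
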